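(* Let $\mathcal{S}$, $\mathcal{A}$, $\mathcal{M}$ be finite sets, $T\ge 0$ a horizon, $p(m)$ a distribution on $\mathcal{M}$, and $p_E(\tau)$ a distribution on trajectories $\tau=(s^0,a^0,\dots,s^T,a^T)\in(\mathcal{S}\times\mathcal{A})^{T+1}$. Let $f_\omega(s,a,\mu,m)\in\mathbb{R}$ be a reward model differentiable in its parameter $\omega$ and in the mean-field argument $\mu\in\Delta(\mathcal{S})$, and let $q_\psi(m\mid\tau)$ be a context inference model differentiable in its parameter $\psi$. Define, for $t=0,\dots,T$, $s\in\mathcal{S}$, $m\in\mathcal{M}$, $$\hat\mu_\psi^t(s\mid m)=\mathbb{E}_{\tau_E\sim p_E(\tau)}\big[q_\psi(m\mid\tau_E)\,\mathbb{1}_{\{s_E^t=s\}}\big],$$ assumed positive, and the energy-based conditional trajectory distribution $$p_{\omega,\psi}(\tau\mid m)=\frac{1}{Z(\omega,\psi)}\Big[\prod_{t=0}^T\hat\mu_\psi^t(s^t\mid m)\Big]\exp\Big(\sum_{t=0}^T f_\omega\big(s^t,a^t,\hat\mu_\psi^t(\cdot\mid m),m\big)\Big),$$ where $Z(\omega,\psi)$ is the normalising constant (the sum of the unnormalised expression over all trajectories). Let $$\mathcal{L}(\omega,\psi)=\mathbb{E}_{m\sim p(m),\,\tau\sim p_{\omega,\psi}(\tau\mid m)}\big[\log q_\psi(m\mid\tau)\big].$$ Suppose $\pi^*_\theta$ is a policy flow such that the trajectory distribution $p_{\hat\mu_\psi,\pi^*_\theta}(\tau\mid m)$ induced by $(\hat\mu_\psi(\cdot\mid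 m),\pi^*_\theta(\cdot\mid\cdot,m))$ equals $p_{\omega,\psi}(\tau\mid m)$ for every $m$. Write $f_\omega$ for $f_\omega(s^t,a^t,\hat\mu_\psi^t(\cdot\mid m),m)$ and let $\kappa(\tau,m)=\frac{\partial}{\partial\psi}\sum_{t=0}^T\big[f_\omega(s^t,a^t,\hat\mu_\psi^t(\cdot\mid m),m)+\log\hat\mu_\psi^t(s^t\mid m)\big]$, i.e. $\kappa(\tau,m)=\sum_{t=0}^T\big(\frac{\partial f_\omega}{\partial\hat\mu_\psi^t}+\frac{1}{\hat\mu_\psi^t(s^t\mid m)}\big)\frac{\partial\hat\mu_\psi^t(s^t\mid m)}{\partial\psi}$. Then, with $m\sim p(m)$ and $\hat\tau,\hat\tau'$ independent samples from $p_{\hat\mu_\psi,\pi^*_\theta}(\tau\mid m)$, $$\frac{\partial\mathcal{L}}{\partial\omega}=\mathbb{E}_{m,\hat\tau}\Big[\log q_\psi(m\mid\hat\tau)\Big(\sum_{t=0}^T\frac{\partial f_\omega}{\partial\omega}(\hat\tau)-\mathbb{E}_{\hat\tau'}\Big[\sum_{t=0}^T\frac{\partial f_\omega}{\partial\omega}(\hat\tau')\Big]\Big)\Big]$$ and $$\frac{\partial\mathcal{L}}{\partial\psi}=\mathbb{E}_{m,\hat\tau}\Big[\log q_\psi(m\mid\hat\tau)\big(\kappa(\hat\tau,m)-\mathbb{E}_{\hat\tau'}[\kappa(\hat\tau',m)]\big)+\frac{\partial\log q_\psi(m\mid\hat\tau)}{\partial\psi}\Big].$$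
   Context: This is set in mean field games with a latent context variable $m$: $\hat\mu_\psi^t(\cdot\mid m)$ is an estimate of the $m$-conditioned mean field at time $t$ built from expert trajectories weighted by the inferred context probabilities, and $p_E(\tau)$ is the marginal (over contexts) distribution of expert trajectories. The trajectory distribution induced by a mean field flow $\mu$ and policy flow $\pi$ conditioned on $m$ is $\prod_t \mu^t(s^t\mid m)\pi^t(a^t\mid s^t,m)$ when the flows are consistent. The paper phrases the conclusion as ''the gradients can be estimated with'' these expectations. *)

From HB Require Import structures.
From mathcomp Require Import all_boot all_order all_algebra.
From mathcomp Require Import all_classical all_reals all_analysis.
Set Implicit Arguments. Unset Strict Implicit. Unset Printing Implicit Defensive.
Import Order.TTheory GRing.Theory Num.Theory.
Import numFieldNormedType.Exports.
Local Open Scope ring_scope.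

Definition traj (S A : finType) (T : nat) := {ffun 'I_T.+1 -> S * A}.
Definition stt (S A : finType) (T : nat) (tau : traj S A T) (t : 'I_T.+1) : S :=
  (tau t).1.
Definition act (S A : finType) (T : nat) (tau : traj S A T) (t : 'I_T.+1) : A :=
  (tau t).2.

Definition is_dist (R : realType) (X : finType) (p : X -> R) : Prop :=
  (forall x, 0 <= p x) /\ \sum_(x : X) p x = 1.

Definition evec (R : realType) (n : nat) (i : 'I_n) : 'rV[R]_n := delta_mx 0 i.
Arguments evec {R n} i.

Definition muhat (R : realType) (S A M : finType) (T dq : nat)
    (pE : traj S A T -> R) (q : 'rV[R]_dq -> traj S A T -> M -> R)
    (psi : 'rV[R]_dq) (t : 'I_T.+1) (s : S) (m : M) : R :=
  \sum_(tau : traj S A T) pE tau * q psi tau m * (stt tau t == s)%:R.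

Definition muhat_vec (R : realType) (S A M : finType) (T dq : nat)
    (pE : traj S A T -> R) (q : 'rV[R]_dq -> traj S A T -> M -> R)
    (psi : 'rV[R]_dq) (t : 'I_T.+1) (m : M) : 'rV[R]_#|S| :=
  \row_(i < #|S|) muhat pE q psi t (enum_val i) m.

Definition unnorm (R : realType) (S A M : finType) (T dq dw : nat)
    (pE : traj S A T -> R) (q : 'rV[R]_dq -> traj S A T -> M -> R)
    (f : 'rV[R]_dw -> S -> A -> 'rV[R]_#|S| -> M -> R)
    (w : 'rV[R]_dw) (psi : 'rV[R]_dq) (tau : traj S A T) (m : M) : R :=
  (\prod_(t < T.+1) muhat pE q psi t (stt tau t) m) *
  expR (\sum_(t < T.+1) f w (stt tau t) (act tau t) (muhat_vec pE q psi t m) m).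

Definition Znorm (R : realType) (S A M : finType) (T dq dw : nat)
    (pE : traj S A T -> R) (q : 'rV[R]_dq -> traj S A T -> M -> R)
    (f : 'rV[R]_dw -> S -> A -> 'rV[R]_#|S| -> M -> R)
    (w : 'rV[R]_dw) (psi : 'rV[R]_dq) (m : M) : R :=
  \sum_(tau : traj S A T) unnorm pE q f w psi tau m.

Definition p_ebm (R : realType) (S A M : finType) (T dq dw : nat)
    (pE : traj S A T -> R) (q : 'rV[R]_dq -> traj S A T -> M -> R)
    (f : 'rV[R]_dw -> S -> A -> 'rV[R]_#|S| -> M -> R)
    (w : 'rV[R]_dw) (psi : 'rV[R]_dq) (tau : traj S A T) (m : M) : R :=
  unnorm pE q f w psi tau m / Znorm pE q f w psi m.

Definition Lobj (R : realType) (S A M : finType) (T dq dw : nat)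
    (p : M -> R) (pE : traj S A T -> R) (q : 'rV[R]_dq -> traj S A T -> M -> R)
    (f : 'rV[R]_dw -> S -> A -> 'rV[R]_#|S| -> M -> R)
    (w : 'rV[R]_dw) (psi : 'rV[R]_dq) : R :=
  \sum_(m : M) p m *
    \sum_(tau : traj S A T) p_ebm pE q f w psi tau m * ln (q psi tau m).

Definition policy_flow (R : realType) (S A M : finType) (T : nat)
    (pi : 'I_T.+1 -> S -> M -> A -> R) : Prop :=
  forall t s m, is_dist (pi t s m).

Definition traj_dist (R : realType) (S A M : finType) (T : nat)
    (mu : 'I_T.+1 -> S -> M -> R) (pi : 'I_T.+1 -> S -> M -> A -> R)
    (tau : traj S A T) (m : M) : R :=
  \prod_(t < T.+1) (mu t (stt tau t) m * pi t (stt tau t) m (act tau t)).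

(* Under the consistency hypothesis the sampling distribution P is the
   energy-based model, which is a softmax over the finitely many trajectories
   with energy  sum_t (f + ln muhat).  For any softmax weights built from
   energies K and any observable c, the derivative of the mean of c is
   E[c (dK - E dK) + dc]  (the log-derivative trick).  Taking c = ln q gives
   both formulas: c does not depend on omega, and the omega-derivative of the
   energy is sum_t df/domega because muhat does not depend on omega. *)

From HB Require Import structures.
From mathcomp Require Import all_boot all_order all_algebra.
From mathcomp Require Import all_classical all_reals all_analysis.
From mathcomp Require Import ring.
Set Implicit Arguments. Unset Strict Implicit. Unset Printing Implicit Defensive.
Import Order.TTheory GRing.Theory Num.Theory.
Import numFieldNormedType.Exports.
Local Open Scope ring_scope.

Section FiniteSums.
Variables (R : realType) (V W : normedModType R) (I : finType).

Lemma differentiable_fsum (F : I -> V -> W) x :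
  (forall i, differentiable (F i) x) ->
  differentiable (fun y => \sum_i F i y) x.
Proof.
move=> dF; rewrite -fct_sumE.
by elim/big_ind: _ => // G H dG dH; exact: differentiableD.
Qed.

Lemma derive_fsum (F : I -> V -> W) x v :
  (forall i, derivable (F i) x v) ->
  'D_v (fun y => \sum_i F i y) x = \sum_i 'D_v (F i) x.
Proof.
move=> dF; rewrite -fct_sumE.
suff dS : is_derive x v (\sum_i F i) (\sum_i 'D_v (F i) x) by rewrite derive_val.
elim/big_rec2: _ => [|i D G _ dG]; first exact: is_derive_cst.
exact: is_deriveD (derivableP (dF i)) dG.
Qed.

End FiniteSums.

Section ScalarChainRule.
Variables (R : realType) (V : normedModType R) (g : V -> R) (h : R -> R).
Variables (x : V) (dh : R).
Hypotheses (dg : differentiable g x) (hd : is_derive (g x) 1 h dh).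

Lemma differentiable_comp_scalar : differentiable (h \o g) x.
Proof. by apply: differentiable_comp => //; apply/derivable1_diffP; case: hd. Qed.

Lemma derive_comp_scalar v : 'D_v (h \o g) x = dh * 'D_v g x.
Proof.
rewrite (deriveE v differentiable_comp_scalar) diff_comp //; last first.
  by apply/derivable1_diffP; case: hd.
rewrite /= (deriveE v dg) deriv1E; last by case: hd.
by rewrite /= derive1E derive_val mulrC.
Qed.

End ScalarChainRule.

Lemma differentiable_ln_comp (R : realType) (V : normedModType R) (g : V -> R) x :
  differentiable g x -> 0 < g x -> differentiable (fun y => ln (g y)) x.
Proof.
by move=> dg g_gt0; exact: differentiable_comp_scalar dg (is_derive1_ln g_gt0).
Qed.

Lemma derive_weighted_fsum (R : realType) (V : normedModType R) (I : finType)
    (a : I -> R) (F : I -> V -> R) x v :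
  (forall i, derivable (F i) x v) ->
  'D_v (fun y => \sum_i a i * F i y) x = \sum_i a i * 'D_v (F i) x.
Proof.
move=> dF; rewrite derive_fsum => [|i]; last exact: derivableM.
by apply: eq_bigr => i _; rewrite deriveMl.
Qed.

Section Softmax.
Variables (R : realType) (I : finType).

Definition softmax (k : I -> R) (i : I) : R := expR (k i) / \sum_j expR (k j).

Lemma sum_expR_gt0 (k : I -> R) (i : I) : 0 < \sum_j expR (k j).
Proof.
rewrite (bigD1 i) //= ltr_pwDl ?expR_gt0 //.
by apply: sumr_ge0 => j _; rewrite expR_ge0.
Qed.

Variables (V : normedModType R) (K : I -> V -> R) (x : V).
Hypothesis dK : forall i, differentiable (K i) x.

Let P := softmax (fun j => K j x).

Lemma differentiable_expR_comp i : differentiable (fun y => expR (K i y)) x.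
Proof. exact: differentiable_comp_scalar (dK i) (is_derive_expR _). Qed.

Lemma derive_expR_comp i v :
  'D_v (fun y => expR (K i y)) x = expR (K i x) * 'D_v (K i) x.
Proof. exact: derive_comp_scalar (dK i) (is_derive_expR _) v. Qed.

Lemma differentiable_softmax i :
  differentiable (fun y => softmax (fun j => K j y) i) x.
Proof.
apply: differentiableM; first exact: differentiable_expR_comp.
apply: differentiableV; last by rewrite gt_eqF // (sum_expR_gt0 _ i).
by apply: differentiable_fsum => j; exact: differentiable_expR_comp.
Qed.

Lemma derive_softmax i v :
  'D_v (fun y => softmax (fun j => K j y) i) x =
  P i * ('D_v (K i) x - \sum_j P j * 'D_v (K j) x).
Proof.
have Z_neq0 : \sum_j expR (K j x) != 0 by rewrite gt_eqF // (sum_expR_gt0 _ i).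
have de j : derivable (fun y => expR (K j y)) x v.
  exact/diff_derivable/differentiable_expR_comp.
have dZ : differentiable (fun y => \sum_j expR (K j y)) x.
  by apply: differentiable_fsum => j; exact: differentiable_expR_comp.
have -> : (fun y => softmax (fun j => K j y) i) =
          (fun y => expR (K i y)) * (fun y => (\sum_j expR (K j y))^-1) by [].
rewrite deriveM //; last exact/diff_derivable/differentiableV.
rewrite deriveV ?derive_fsum //; last exact: diff_derivable.
have -> : \sum_j 'D_v (fun y => expR (K j y)) x =
          \sum_j expR (K j x) * 'D_v (K j) x.
  by apply: eq_bigr => j _; exact: derive_expR_comp.
have -> : \sum_j P j * 'D_v (K j) x =
          (\sum_j expR (K j x))^-1 * \sum_j expR (K j x) * 'D_v (K j) x.
  by rewrite mulr_sumr; apply: eq_bigr => j _; rewrite /P /softmax mulrCA mulrA.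
rewrite derive_expR_comp /P /softmax /GRing.scale /=.
by field.
Qed.

Variables (c : I -> V -> R).
Hypothesis dc : forall i, differentiable (c i) x.

Lemma differentiable_softmax_mean :
  differentiable (fun y => \sum_i softmax (fun j => K j y) i * c i y) x.
Proof.
apply: differentiable_fsum => i.
by apply: differentiableM; [exact: differentiable_softmax | exact: dc].
Qed.

Lemma derive_softmax_mean v :
  'D_v (fun y => \sum_i softmax (fun j => K j y) i * c i y) x =
  \sum_i P i * (c i x * ('D_v (K i) x - \sum_j P j * 'D_v (K j) x)
                + 'D_v (c i) x).
Proof.
rewrite derive_fsum => [|i]; last first.
  by apply/diff_derivable/differentiableM; [exact: differentiable_softmax|].
apply: eq_bigr => i _.
rewrite deriveM; [|exact/diff_derivable/differentiable_softmax|exact/diff_derivable].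
by rewrite derive_softmax /GRing.scale /= /P; ring.
Qed.

End Softmax.

Section EnergyModel.
Variables (R : realType) (S A M : finType) (T dq dw : nat).
Variables (pE : traj S A T -> R) (q : 'rV[R]_dq -> traj S A T -> M -> R).
Variable (f : 'rV[R]_dw -> S -> A -> 'rV[R]_#|S| -> M -> R).

Definition energy w psi (tau : traj S A T) m : R :=
  \sum_(t < T.+1) (f w (stt tau t) (act tau t) (muhat_vec pE q psi t m) m
                   + ln (muhat pE q psi t (stt tau t) m)).

Hypothesis muhat_gt0 : forall psi t s m, 0 < muhat pE q psi t s m.

Lemma unnorm_expR_energy w psi tau m :
  unnorm pE q f w psi tau m = expR (energy w psi tau m).
Proof.
rewrite /unnorm /energy expR_sum -big_split /= expR_sum.
apply: eq_bigr => t _.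
by rewrite expRD lnK ?posrE // mulrC.
Qed.

Lemma p_ebm_softmax w psi tau m :
  p_ebm pE q f w psi tau m = softmax (fun tau' => energy w psi tau' m) tau.
Proof.
rewrite /p_ebm /Znorm /softmax unnorm_expR_energy.
by under eq_bigr do rewrite unnorm_expR_energy.
Qed.

Lemma Lobj_softmax (p : M -> R) w psi :
  Lobj p pE q f w psi =
  \sum_m p m *
    \sum_tau softmax (fun tau' => energy w psi tau' m) tau * ln (q psi tau m).
Proof.
apply: eq_bigr => m _; congr (_ * _).
by apply: eq_bigr => tau _; rewrite p_ebm_softmax.
Qed.

Hypothesis f_differentiable_w :
  forall s a mu m w, differentiable (fun w' => f w' s a mu m) w.
Hypothesis f_differentiable_mu :
  forall w s a m mu, differentiable (fun mu' => f w s a mu' m) mu.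
Hypothesis q_differentiable :
  forall tau m psi, differentiable (fun psi' => q psi' tau m) psi.

Lemma differentiable_energy_w psi tau m w :
  differentiable (fun w' => energy w' psi tau m) w.
Proof.
apply: differentiable_fsum => t.
exact: differentiableD (f_differentiable_w _ _ _ _ _) (differentiable_cst _ _).
Qed.

Lemma derive_energy_w psi tau m w v :
  'D_v (fun w' => energy w' psi tau m) w =
  \sum_(t < T.+1)
    'D_v (fun w' => f w' (stt tau t) (act tau t) (muhat_vec pE q psi t m) m) w.
Proof.
rewrite derive_fsum => [|t]; last first.
  exact/diff_derivable/differentiableD/differentiable_cst.
apply: eq_bigr => t _; rewrite deriveD ?derive_cst ?addr0 //.
exact: diff_derivable.
Qed.

Lemma differentiable_muhat t s m psi :
  differentiable (fun psi' => muhat pE q psi' t s m) psi.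
Proof.
apply: differentiable_fsum => tau.
by apply: differentiableM => //; apply: differentiableM.
Qed.

Lemma differentiable_muhat_vec t m psi :
  differentiable (fun psi' => muhat_vec pE q psi' t m) psi.
Proof.
have -> : (fun psi' => muhat_vec pE q psi' t m) =
    (fun psi' => \sum_(i < #|S|) muhat pE q psi' t (enum_val i) m *: delta_mx 0 i).
  apply/funext => psi'; rewrite [LHS]row_sum_delta.
  by apply: eq_bigr => i _; rewrite mxE.
apply: differentiable_fsum => i.
exact/differentiableZl/differentiable_muhat.
Qed.

Lemma differentiable_energy_psi w tau m psi :
  differentiable (fun psi' => energy w psi' tau m) psi.
Proof.
apply: differentiable_fsum => t; apply: differentiableD.
  exact: differentiable_comp (differentiable_muhat_vec _ _ _)
                             (f_differentiable_mu _ _ _ _ _).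
exact: differentiable_ln_comp (differentiable_muhat _ _ _ _) (muhat_gt0 _ _ _ _).
Qed.

End EnergyModel.

Theorem proposition1 (R : realType) (S A M : finType) (T dw dq : nat)
    (p : M -> R) (pE : traj S A T -> R)
    (f : 'rV[R]_dw -> S -> A -> 'rV[R]_#|S| -> M -> R)
    (q : 'rV[R]_dq -> traj S A T -> M -> R)
    (pi : 'I_T.+1 -> S -> M -> A -> R)
    (w0 : 'rV[R]_dw) (psi0 : 'rV[R]_dq) :
  is_dist p -> is_dist pE ->
  (forall s a mu m w, differentiable (fun w' => f w' s a mu m) w) ->
  (forall w s a m mu, differentiable (fun mu' => f w s a mu' m) mu) ->
  (forall tau m psi, differentiable (fun psi' => q psi' tau m) psi) ->
  (forall psi tau m, 0 < q psi tau m) ->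
  (forall psi t s m, 0 < muhat pE q psi t s m) ->
  policy_flow pi ->
  (forall tau m, traj_dist (muhat pE q psi0) pi tau m = p_ebm pE q f w0 psi0 tau m) ->
  let P := traj_dist (muhat pE q psi0) pi in
  let gw (i : 'I_dw) (tau : traj S A T) (m : M) :=
    \sum_(t < T.+1) 'D_(evec i)
       (fun w => f w (stt tau t) (act tau t) (muhat_vec pE q psi0 t m) m) w0 in
  let kappa (j : 'I_dq) (tau : traj S A T) (m : M) :=
    'D_(evec j) (fun psi => \sum_(t < T.+1)
        (f w0 (stt tau t) (act tau t) (muhat_vec pE q psi t m) m
         + ln (muhat pE q psi t (stt tau t) m))) psi0 in
  (forall i : 'I_dw,
     'D_(evec i) (fun w => Lobj p pE q f w psi0) w0 =
     \sum_(m : M) p m * \sum_(tau : traj S A T) P tau m *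
       (ln (q psi0 tau m) *
        (gw i tau m - \sum_(tau' : traj S A T) P tau' m * gw i tau' m))) /\
  (forall j : 'I_dq,
     'D_(evec j) (fun psi => Lobj p pE q f w0 psi) psi0 =
     \sum_(m : M) p m * \sum_(tau : traj S A T) P tau m *
       (ln (q psi0 tau m) *
          (kappa j tau m - \sum_(tau' : traj S A T) P tau' m * kappa j tau' m)
        + 'D_(evec j) (fun psi => ln (q psi tau m)) psi0)).
Proof.
move=> _ _ df_w df_mu dq_psi q_gt0 mu_gt0 _ P_ebm P gw kappa.
have P_softmax tau m :
    P tau m = softmax (fun tau' => energy pE q f w0 psi0 tau' m) tau.
  by rewrite /P P_ebm p_ebm_softmax.
split=> [i | j].
- rewrite (funext (fun w => Lobj_softmax f mu_gt0 p w psi0)).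
  have dK tau m := differentiable_energy_w pE q df_w psi0 tau m w0.
  have dc tau m := differentiable_cst (ln (q psi0 tau m)) w0.
  rewrite derive_weighted_fsum => [|m]; last first.
    exact/diff_derivable/differentiable_softmax_mean.
  apply: eq_bigr => m _; congr (_ * _).
  rewrite (derive_softmax_mean (dK^~ m) (dc^~ m)).
  apply: eq_bigr => tau _; rewrite derive_cst addr0 derive_energy_w // P_softmax.
  congr (_ * (_ * (_ - _))).
  by apply: eq_bigr => tau' _; rewrite P_softmax derive_energy_w.
- rewrite (funext (fun psi => Lobj_softmax f mu_gt0 p w0 psi)).
  have dK tau m := differentiable_energy_psi mu_gt0 df_mu dq_psi w0 tau m psi0.
  have dc tau m : differentiable (fun psi => ln (q psi tau m)) psi0.
    exact: differentiable_ln_comp (dq_psi tau m psi0) (q_gt0 psi0 tau m).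
  rewrite derive_weighted_fsum => [|m]; last first.
    exact/diff_derivable/differentiable_softmax_mean.
  apply: eq_bigr => m _; congr (_ * _).
  rewrite (derive_softmax_mean (dK^~ m) (dc^~ m)).
  apply: eq_bigr => tau _; rewrite P_softmax.
  congr (_ * (_ * (_ - _) + _)).
  by apply: eq_bigr => tau' _; rewrite P_softmax.
Qed.
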